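(* If the communication graph of an SCS is a tree, then the system has a single ring.
   Context: Let $T=\{C_1,\dots,C_n\}$ be pairwise disjoint unit circles in the plane (trajectories) and $\epsilon<0.5$ a communication range. The graph of potential links $G_\epsilon(T)$ has the circle centers as nodes and an edge $\{i,j\}$ whenever the centers of $C_i,C_j$ are at distance at most $2+\epsilon$; it is assumed connected. Points of a circle are identified with angles (modulo $2\pi$), and a robot traverses a circle in one time unit. A schedule is a pair $(f,g)$, $f:T\to[0,2\pi)$, $g:T\to\{-1,1\}$ ($1$ = counterclockwise); the robot on $C_i$ is at angle $f(C_i)+2\pi g(C_i)t$ at time $t$. A communication graph $G=(V,E)$ is a connected spanning subgraph of $G_\epsilon(T)$. The link position $\phi_{ij}$ is the point of $C_i$ closest to $C_j$. A schedule is $G$-synchronized if for every $\{i,j\}\in E$ the robot on $C_i$ is at $\phi_{ij}$ exactly when the robot on $C_j$ is at $\phi_{ji}$. An SCS with communication graph $G$ consists of $n$ robots, one per circle, moving under a $G$-synchronized schedule with $g(C_i)=-g(C_j)$ for all $\{i,j\}\in E$. A ring of the SCS is the closed path (locus of points) visited by a robot that follows the assigned movement direction on each circle and always shifts to the neighboring circle (in $G$) at every link position it reaches; every arc of a circle between consecutive link positions lies on exactly one ring. *)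

From Stdlib Require Import Reals Relations.
From mathcomp Require Import all_boot.

Set Implicit Arguments.
Unset Strict Implicit.
Unset Printing Implicit Defensive.

Local Open Scope R_scope.

Definition point := (R * R)%type.

Definition dist (p q : point) : R :=
  sqrt ((fst p - fst q) ^ 2 + (snd p - snd q) ^ 2).

Definition on_circle (c : point) (th : R) : point :=
  (fst c + cos th, snd c + sin th).

Section SCS.
Variables (n : nat) (c : 'I_n -> point).

Definition pairwise_disjoint : Prop :=
  forall i j : 'I_n, i <> j ->
    forall th1 th2 : R, on_circle (c i) th1 <> on_circle (c j) th2.

Definition potential_link (eps : R) (i j : 'I_n) : Prop :=
  i <> j /\ dist (c i) (c j) <= 2 + eps.

Definition communication_graph (eps : R) (E : rel 'I_n) : Prop :=
  (forall i j, E i j = E j i) /\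
  (forall i, ~~ E i i) /\
  (forall i j, E i j -> potential_link eps i j) /\
  (forall i j, connect E i j).

Definition is_tree (E : rel 'I_n) : Prop :=
  (forall i j, connect E i j) /\
  (forall s : seq 'I_n, uniq s -> (3 <= size s)%N -> ~~ cycle E s).

Definition link_pos (i j : 'I_n) : point :=
  let d := dist (c i) (c j) in
  (fst (c i) + (fst (c j) - fst (c i)) / d,
   snd (c i) + (snd (c j) - snd (c i)) / d).

(* Schedule (f, g): f i in [0, 2pi), g i in {-1, 1} (1 = counterclockwise). *)
Definition schedule (f g : 'I_n -> R) : Prop :=
  forall i, 0 <= f i < 2 * PI /\ (g i = 1 \/ g i = -1).

Definition robot_pos (f g : 'I_n -> R) (i : 'I_n) (t : R) : point :=
  on_circle (c i) (f i + 2 * PI * g i * t).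

Definition synchronized (E : rel 'I_n) (f g : 'I_n -> R) : Prop :=
  forall i j, E i j -> forall t : R,
    robot_pos f g i t = link_pos i j <-> robot_pos f g j t = link_pos j i.

Definition SCS (eps : R) (E : rel 'I_n) (f g : 'I_n -> R) : Prop :=
  communication_graph eps E /\ schedule f g /\ synchronized E f g /\
  (forall i j, E i j -> g i = - g j).

(* A dart (i, j) with E i j stands for a robot that has
   just shifted from C_i to C_j at the link position phi_ji, and is about to
   traverse the arc of C_j that starts at phi_ji in direction g j.
   [ring_step g (i,j) (j,k)]: moving on C_j from phi_ji in direction g j, the
   first link position of C_j reached (after a positive time s <= 1) is
   phi_jk; the robot then shifts to C_k. *)
Definition ring_step (E : rel 'I_n) (g : 'I_n -> R)
    (d1 d2 : 'I_n * 'I_n) : Prop :=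
  let (i, j) := d1 in let (j', k) := d2 in
  j' = j /\ E i j /\ E j k /\
  exists alpha s : R,
    on_circle (c j) alpha = link_pos j i /\
    0 < s <= 1 /\
    on_circle (c j) (alpha + 2 * PI * g j * s) = link_pos j k /\
    (forall s' : R, 0 < s' < s -> forall k' : 'I_n, E j k' ->
        on_circle (c j) (alpha + 2 * PI * g j * s') <> link_pos j k').

Definition same_ring (E : rel 'I_n) (g : 'I_n -> R) (d1 d2 : 'I_n * 'I_n)
  : Prop := clos_refl_trans _ (ring_step E g) d1 d2.

Definition single_ring (E : rel 'I_n) (g : 'I_n -> R) : Prop :=
  forall d1 d2 : 'I_n * 'I_n, E d1.1 d1.2 -> E d2.1 d2.2 ->
    same_ring E g d1 d2.

End SCS.

(* A robot entering C_j at the link position phi_ji leaves C_j at the first link position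
   it meets in its direction of motion, so the ring successor of the dart (i, j) is
   (j, sigma_j i), where sigma_j orders the neighbours of j by the angle of their link
   positions.  These positions are pairwise distinct (disjoint unit circles have centres
   more than 2 apart, neighbours are at most 2 + eps apart), so sigma_j is a cyclic
   permutation of the neighbours of j and the rings are the faces of the rotation system
   (sigma_j).  In a tree, the face through (u, v) can leave the component of v in T - uv
   only through (v, u), so it contains (v, u); by cyclicity of sigma_u it then contains
   every dart into u, and by connectedness every dart. *)

From Stdlib Require Import Reals Lra Lia ClassicalEpsilon Relations.
From mathcomp Require Import all_boot.

Set Implicit Arguments.
Unset Strict Implicit.
Unset Printing Implicit Defensive.

Local Open Scope R_scope.

Lemma exists_angle x y : x ^ 2 + y ^ 2 = 1 -> exists th, cos th = x /\ sin th = y.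
Proof.
move=> xy1; have x_bound : -1 <= x <= 1 by nra.
have sin_acos_abs : sqrt (1 - x²) = Rabs y.
  by rewrite -sqrt_Rsqr_abs; congr sqrt; rewrite /Rsqr; nra.
case: (Rle_or_lt 0 y) => y_sign.
- exists (acos x); rewrite cos_acos // sin_acos // sin_acos_abs Rabs_right; lra.
- exists (- acos x); rewrite cos_neg sin_neg cos_acos // sin_acos // sin_acos_abs.
  rewrite Rabs_left; lra.
Qed.

Lemma trig_2PI_multiple (z : Z) : cos (2 * PI * IZR z) = 1 /\ sin (2 * PI * IZR z) = 0.
Proof.
have sin_zPI : sin (PI * IZR z) = 0 by apply: sin_eq_0_1; exists z; ring.
have -> : 2 * PI * IZR z = 2 * (PI * IZR z) by ring.
by rewrite cos_2a_sin sin_2a sin_zPI; split; ring.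
Qed.

Lemma on_circle_eqP p a b :
  on_circle p a = on_circle p b <-> exists z : Z, a = b + 2 * PI * IZR z.
Proof.
rewrite /on_circle; split=> [[/Rplus_eq_reg_l cos_ab /Rplus_eq_reg_l sin_ab] | [z ->]].
- have cos_diff : cos (a - b) = 1.
    by rewrite cos_minus cos_ab sin_ab -(sin2_cos2 b) /Rsqr; ring.
  have sin_half : sin ((a - b) / 2) = 0.
    have := cos_2a_sin ((a - b) / 2).
    have -> : 2 * ((a - b) / 2) = a - b by field.
    nra.
  by case: (sin_eq_0_0 _ sin_half) => z half_turns; exists z; lra.
- case: (trig_2PI_multiple z) => cos1 sin0.
  by rewrite cos_plus sin_plus cos1 sin0 !Rmult_1_r !Rmult_0_r Rminus_0_r Rplus_0_r.
Qed.

Lemma dist_sqr p q : dist p q ^ 2 = (fst p - fst q) ^ 2 + (snd p - snd q) ^ 2.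
Proof. by rewrite /dist pow2_sqrt //; apply: Rplus_le_le_0_compat; apply: pow2_ge_0. Qed.

Lemma unit_circles_meet_far p q :
  (forall a b, on_circle p a <> on_circle q b) -> 2 < dist p q.
Proof.
move=> disjoint; case: (Rlt_or_le 2 (dist p q)) => // near; exfalso.
have dist_nneg := sqrt_pos ((fst p - fst q) ^ 2 + (snd p - snd q) ^ 2).
have := dist_sqr p q; rewrite /dist in near dist_nneg *.
case: p q disjoint near dist_nneg => [xp yp] [xq yq] disjoint; rewrite /fst /snd.
set dx := xq - xp; set dy := yq - yp; set d2 := dx ^ 2 + dy ^ 2.
have -> : (xp - xq) ^ 2 + (yp - yq) ^ 2 = d2 by rewrite /d2 /dx /dy; ring.
move=> near dist_nneg d2_def; have d2_le4 : d2 <= 4 by rewrite -d2_def; nra.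
case: (Req_dec d2 0) => [d2_0 | d2_n0].
  have [dx0 dy0] : dx = 0 /\ dy = 0 by rewrite /d2 in d2_0; split; nra.
  apply: (disjoint 0 0); rewrite /on_circle /=.
  by congr pair; rewrite /dx /dy in dx0 dy0; lra.
have d2_pos : 0 < d2 by rewrite /d2 in d2_n0 *; nra.
(* The circles meet at [p + (dx/2 - t dy, dy/2 + t dx)] with [t^2 d2 = 1 - d2/4]. *)
set t := sqrt (1 / d2 - 1 / 4).
have t_sqr : t ^ 2 * d2 = 1 - d2 / 4.
  have quarter_le : 1 / 4 <= 1 / d2 by rewrite /Rdiv !Rmult_1_l; apply: Rinv_le_contravar.
  rewrite /t pow2_sqrt; [field; lra | lra].
have [a [cos_a sin_a]] : exists a, cos a = dx / 2 - t * dy /\ sin a = dy / 2 + t * dx.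
  by apply: exists_angle; rewrite /d2 in t_sqr; nra.
have [b [cos_b sin_b]] : exists b, cos b = - dx / 2 - t * dy /\ sin b = - dy / 2 + t * dx.
  by apply: exists_angle; rewrite /d2 in t_sqr; nra.
apply: (disjoint a b); rewrite /on_circle /= cos_a sin_a cos_b sin_b /dx /dy.
by congr pair; lra.
Qed.

Section LinkPositions.
Variables (n : nat) (c : 'I_n -> point).

Lemma link_pos_on_circle i j :
  0 < dist (c i) (c j) -> exists th, on_circle (c i) th = link_pos c i j.
Proof.
move=> d_pos; have := dist_sqr (c i) (c j); rewrite /link_pos.
set d := dist (c i) (c j) in d_pos *.
case: (c i) (c j) => [xi yi] [xj yj]; cbn [fst snd] => d_sqr.
have [th [cos_th sin_th]] : exists th, cos th = (xj - xi) / d /\ sin th = (yj - yi) / d.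
  apply: exists_angle; apply: (Rmult_eq_reg_l (d ^ 2)); last by apply: pow_nonzero; lra.
  have -> : d ^ 2 * (((xj - xi) / d) ^ 2 + ((yj - yi) / d) ^ 2) =
            (xi - xj) ^ 2 + (yi - yj) ^ 2 by field_simplify; lra.
  by rewrite Rmult_1_r d_sqr.
by exists th; rewrite /on_circle /= cos_th sin_th.
Qed.

Lemma dist_of_same_link_pos i k k' :
  0 < dist (c i) (c k) -> 0 < dist (c i) (c k') -> link_pos c i k = link_pos c i k' ->
  dist (c k) (c k') = Rabs (dist (c i) (c k) - dist (c i) (c k')).
Proof.
move=> d_pos d'_pos; have := dist_sqr (c i) (c k); rewrite /link_pos.
set d := dist (c i) (c k) in d_pos *; set d' := dist (c i) (c k') in d'_pos *.
rewrite -sqrt_Rsqr_abs /dist.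
case: (c i) (c k) (c k') => [xi yi] [xk yk] [xl yl]; cbn [fst snd] => d_sqr [same_x same_y].
(* Both centres lie on the ray from [c i] through the link position, at distances d and d'. *)
set wx := (xk - xi) / d; set wy := (yk - yi) / d.
have xl_def : xl - xi = d' * wx.
  by rewrite /wx (_ : (xk - xi) / d = (xl - xi) / d'); [field | ]; lra.
have yl_def : yl - yi = d' * wy.
  by rewrite /wy (_ : (yk - yi) / d = (yl - yi) / d'); [field | ]; lra.
have unit_w : wx ^ 2 + wy ^ 2 = 1.
  apply: (Rmult_eq_reg_l (d ^ 2)); last by apply: pow_nonzero; lra.
  have -> : d ^ 2 * (wx ^ 2 + wy ^ 2) = (xi - xk) ^ 2 + (yi - yk) ^ 2.
    by rewrite /wx /wy; field_simplify; lra.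
  by rewrite Rmult_1_r d_sqr.
have xk_def : xk - xi = d * wx by rewrite /wx; field; lra.
have yk_def : yk - yi = d * wy by rewrite /wy; field; lra.
congr sqrt; rewrite /Rsqr.
have -> : xk - xl = (d - d') * wx by lra.
have -> : yk - yl = (d - d') * wy by lra.
by rewrite -[X in _ = X]Rmult_1_r -unit_w; ring.
Qed.

Hypothesis disjoint : pairwise_disjoint c.

Lemma center_dist_gt2 i j : i <> j -> 2 < dist (c i) (c j).
Proof. by move=> neq_ij; apply: unit_circles_meet_far; apply: disjoint. Qed.

Lemma link_pos_inj i k k' : i <> k -> i <> k' ->
  dist (c i) (c k) <= 4 -> dist (c i) (c k') <= 4 ->
  link_pos c i k = link_pos c i k' -> k = k'.
Proof.
move=> neq_ik neq_ik' near_k near_k' same_link; case: (k =P k') => // neq_kk'.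
have far_k := center_dist_gt2 neq_ik; have far_k' := center_dist_gt2 neq_ik'.
have := center_dist_gt2 neq_kk'.
by rewrite (dist_of_same_link_pos _ _ same_link); [split_Rabs | |]; lra.
Qed.

End LinkPositions.

Definition gap (a b : R) : R := if Rlt_dec a b then b - a else 1 + b - a.

Lemma gap_self a : gap a a = 1.
Proof. by rewrite /gap; case: Rlt_dec => /=; lra. Qed.

Lemma gapC a b : a <> b -> gap a b + gap b a = 1.
Proof. by rewrite /gap; case: (Rlt_dec a b) => /= ?; case: (Rlt_dec b a) => /= ?; lra. Qed.

Section Gap.
Variables a b c : R.
Hypotheses (a_bounds : 0 <= a < 1) (b_bounds : 0 <= b < 1) (c_bounds : 0 <= c < 1).

Lemma gap_bounds : 0 < gap a b <= 1.
Proof. by rewrite /gap; case: Rlt_dec => /=; lra. Qed.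

Lemma gap_lt1 : a <> b -> gap a b < 1.
Proof. by rewrite /gap; case: Rlt_dec => /=; lra. Qed.

Lemma gap_inj : gap a b = gap a c -> b = c.
Proof. by rewrite /gap; case: (Rlt_dec a b) => /= ?; case: (Rlt_dec a c) => /= ?; lra. Qed.

Lemma gap_split : gap a b < gap a c -> gap a c = gap a b + gap b c.
Proof.
rewrite /gap; case: (Rlt_dec a b) => /= ?; case: (Rlt_dec a c) => /= ?.
all: by case: (Rlt_dec b c) => /= ?; lra.
Qed.

Lemma shift_mod1_gap s : 0 < s <= 1 -> (exists m : Z, a + s = b + IZR m) <-> s = gap a b.
Proof.
move=> s_bounds; rewrite /gap; split=> [[m shift] |].
  have : -1 < IZR m < 2 by lra.
  case=> /lt_IZR m_gt /lt_IZR m_lt; move: shift.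
  have [-> | ->] : m = 0%Z \/ m = 1%Z by lia.
  1,2: by move=> shift; case: (Rlt_dec a b) => /= cmp; lra.
by case: (Rlt_dec a b) => /= _ ->; [exists 0%Z | exists 1%Z]; rewrite /=; ring.
Qed.

End Gap.

Lemma shift_mod1_frac_part u v s :
  (exists m : Z, u + s = v + IZR m) <->
  (exists m : Z, frac_part u + s = frac_part v + IZR m).
Proof.
rewrite /frac_part; split=> [[m shift] | [m shift]].
- by exists (m + Int_part v - Int_part u)%Z; rewrite minus_IZR plus_IZR; lra.
- by exists (m - Int_part v + Int_part u)%Z; rewrite plus_IZR minus_IZR; lra.
Qed.

Lemma on_circle_turn p g a b s : g = 1 \/ g = -1 ->
  on_circle p (a + 2 * PI * g * s) = on_circle p b <->
  exists z : Z, g * a / (2 * PI) + s = g * b / (2 * PI) + IZR z.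
Proof.
move=> g_unit; have PI_pos := PI_RGT_0; rewrite on_circle_eqP.
have [a' ->] : exists a', a = 2 * PI * a' by exists (a / (2 * PI)); field; lra.
have [b' ->] : exists b', b = 2 * PI * b' by exists (b / (2 * PI)); field; lra.
have scale x y : 2 * PI * x = 2 * PI * y <-> x = y.
  by split=> [eq_scaled | ->] //; apply: Rmult_eq_reg_l eq_scaled _; lra.
have -> : g * (2 * PI * a') / (2 * PI) = g * a' by field; lra.
have -> : g * (2 * PI * b') / (2 * PI) = g * b' by field; lra.
case: g_unit => ->; split=> [][z shift].
- by exists z; apply/scale; lra.
- by exists z; move/scale: shift; lra.
- by exists (- z)%Z; rewrite opp_IZR; apply/scale; lra.
- by exists (- z)%Z; move/scale: shift; rewrite opp_IZR; lra.
Qed.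

Section LinkPhases.
Variables (n : nat) (c : 'I_n -> point) (g : 'I_n -> R).

Definition link_angle (j k : 'I_n) : R :=
  epsilon (inhabits 0) (fun th => on_circle (c j) th = link_pos c j k).

Definition link_phase (j k : 'I_n) : R := frac_part (g j * link_angle j k / (2 * PI)).

Lemma link_angleP j k :
  0 < dist (c j) (c k) -> on_circle (c j) (link_angle j k) = link_pos c j k.
Proof. by move=> d_pos; exact: epsilon_spec (inhabits 0) _ (link_pos_on_circle d_pos). Qed.

Lemma link_phase_bounds j k : 0 <= link_phase j k < 1.
Proof. by rewrite /link_phase; have [] := base_fp (g j * link_angle j k / (2 * PI)); lra. Qed.

Lemma on_circle_link_phase j i k s :
  g j = 1 \/ g j = -1 -> 0 < dist (c j) (c k) -> 0 < s <= 1 ->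
  on_circle (c j) (link_angle j i + 2 * PI * g j * s) = link_pos c j k <->
  s = gap (link_phase j i) (link_phase j k).
Proof.
move=> g_unit d_pos s_bounds; rewrite -(link_angleP d_pos) on_circle_turn //.
by rewrite shift_mod1_frac_part; apply: shift_mod1_gap => //; apply: link_phase_bounds.
Qed.

End LinkPhases.

Lemma fin_exists_argmin (T : finType) (A : pred T) (F : T -> R) x0 :
  A x0 -> exists2 x, A x & forall y, A y -> F x <= F y.
Proof.
move=> Ax0.
suff [x Ax min_x] : exists2 x, A x & forall y, y \in enum T -> A y -> F x <= F y.
  by exists x => // y; apply: min_x; rewrite mem_enum.
elim: (enum T) => [|a s [x Ax min_x]]; first by exists x0.
have [Aa|nAa] := boolP (A a); last first.
  by exists x => // y /predU1P [-> Aa | /min_x //]; rewrite Aa in nAa.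
have [le_xa | lt_ax] := Rle_dec (F x) (F a).
  by exists x => // y /predU1P [-> | /min_x].
by exists a => // y /predU1P [-> | /min_x min_xy /min_xy]; lra.
Qed.

Section CyclicSuccessor.
Variables (T : finType) (N : pred T) (P : T -> R).
Hypothesis P_bounds : forall x, 0 <= P x < 1.
Hypothesis P_inj : {in N &, injective P}.

Definition cyc_succ (x : T) : T :=
  epsilon (inhabits x)
    (fun y => N y /\ forall z, N z -> gap (P x) (P y) <= gap (P x) (P z)).

Lemma cyc_succP x : N x ->
  N (cyc_succ x) /\ forall z, N z -> gap (P x) (P (cyc_succ x)) <= gap (P x) (P z).
Proof.
move=> Nx; apply: (epsilon_spec (inhabits x) (fun y => N y /\ _)).
by have [y Ny min_y] := fin_exists_argmin (fun z => gap (P x) (P z)) Nx; exists y.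
Qed.

Lemma gap_inj_in x y z : N y -> N z -> gap (P x) (P y) = gap (P x) (P z) -> y = z.
Proof. by move=> Ny Nz /gap_inj eq_P; apply: P_inj => //; apply: eq_P. Qed.

Lemma cyc_succ_inj : {in N &, injective cyc_succ}.
Proof.
move=> x x' Nx Nx' same_succ; case: (x =P x') => // neq_xx'; exfalso.
have [Nk min_x] := cyc_succP Nx; have [_ min_x'] := cyc_succP Nx'.
rewrite -same_succ in min_x'; set k := cyc_succ x in Nk min_x min_x'.
have neq_P y y' : N y -> N y' -> y <> y' -> P y <> P y'.
  by move=> Ny Ny' neq /P_inj; auto.
have lt_gap y y' : N y -> N y' -> y <> y' -> gap (P y) (P y') < 1.
  by move=> Ny Ny' neq; apply: gap_lt1 => //; apply: neq_P.
have neq_kx : k <> x.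
  move=> kx; have := min_x x' Nx'; rewrite kx gap_self.
  by have := lt_gap _ _ Nx Nx' neq_xx'; lra.
have neq_kx' : k <> x'.
  move=> kx'; have := min_x' x Nx; rewrite kx' gap_self.
  by have := lt_gap _ _ Nx' Nx (nesym neq_xx'); lra.
have split_at y z : N z -> gap (P y) (P k) <= gap (P y) (P z) -> k <> z ->
    gap (P y) (P z) = gap (P y) (P k) + gap (P k) (P z).
  move=> Nz le_kz neq_kz; apply: (gap_split (P_bounds _) (P_bounds _)).
  by case/Rle_lt_or_eq: le_kz => // /(gap_inj_in Nk Nz).
(* Going from x to x' and back is one full turn, yet it passes k twice. *)
have := split_at _ _ Nx' (min_x x' Nx') neq_kx'.
have := split_at _ _ Nx (min_x' x Nx) neq_kx.
have := gapC (neq_P _ _ Nx Nx' neq_xx'); have := gapC (neq_P _ _ Nx Nk (nesym neq_kx)).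
by have := gapC (neq_P _ _ Nx' Nk (nesym neq_kx')); lra.
Qed.

Lemma cyc_succ_cyclic (S : pred T) x0 : S x0 -> {subset S <= N} ->
  (forall x, S x -> S (cyc_succ x)) -> {subset N <= S}.
Proof.
move=> Sx0 sub_SN S_succ k Nk; apply/negPn/negP => nSk.
(* The last element of S before k in cyclic order has its successor strictly between. *)
have [i Si min_i] := fin_exists_argmin (fun i => gap (P i) (P k)) Sx0.
have [_ min_succ] := cyc_succP (sub_SN _ Si); set s := cyc_succ i in min_succ.
have Ss : S s by apply: S_succ.
have lt_si : gap (P i) (P s) < gap (P i) (P k).
  case/Rle_lt_or_eq: (min_succ k Nk) => // /(gap_inj_in (sub_SN _ Ss) Nk) sk.
  by move/negP: nSk; rewrite -sk.
have := min_i s Ss; rewrite (gap_split (P_bounds _) (P_bounds _) lt_si).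
by have := gap_bounds (P_bounds i) (P_bounds s); lra.
Qed.

End CyclicSuccessor.

Section TreeFaces.
Variables (T : finType) (E : rel T) (rot : T -> T -> T).
Hypothesis E_sym : symmetric E.
Hypothesis E_irr : irreflexive E.
Hypothesis E_connected : forall x y, connect E x y.
Hypothesis E_acyclic : forall s, uniq s -> (2 < size s)%N -> ~~ cycle E s.
Hypothesis rot_in : forall j i, E j i -> E j (rot j i).
Hypothesis rot_inj : forall j, {in E j &, injective (rot j)}.
Hypothesis rot_cyclic : forall j (S : pred T) i0, S i0 -> {subset S <= E j} ->
  (forall i, S i -> S (rot j i)) -> {subset E j <= S}.

Definition face (d : T * T) : T * T := if E d.1 d.2 then (d.2, rot d.2 d.1) else d.

Lemma face_dart d : E d.1 d.2 -> E (face d).1 (face d).2.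
Proof. by case: d => i j /= Eij; rewrite /face /= Eij rot_in // E_sym. Qed.

Lemma face_inj : injective face.
Proof.
move=> [i j] [i' j']; rewrite /face /=.
case: (boolP (E i j)) => Eij; case: (boolP (E i' j')) => Ei'j' //.
- case=> eq_j same_rot; subst j'; rewrite E_sym in Eij; rewrite E_sym in Ei'j'.
  by rewrite (rot_inj Eij Ei'j' same_rot).
- by case=> eq_i' eq_j'; move: Ei'j'; rewrite -eq_i' -eq_j' rot_in // E_sym.
- by case=> eq_i eq_j; move: Eij; rewrite eq_i eq_j rot_in // E_sym.
Qed.

Definition remove_edge u v : rel T :=
  [rel x y | E x y && ((x, y) \notin [:: (u, v); (v, u)])].

Lemma tree_edge_cut u v : E u v -> ~~ connect (remove_edge u v) v u.
Proof.
move=> Euv; apply/negP => /connectP [p path_p last_p].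
case/shortenP: path_p last_p => q path_q uniq_q _ last_q.
have size_q : (2 < size (v :: q))%N.
  case: q path_q last_q {uniq_q} => [|w [|w' q]] //= path_q last_q.
    by move: Euv; rewrite -last_q E_irr.
  by move: path_q; rewrite -last_q /remove_edge /= !inE !eqxx orbT andbF.
apply: (negP (E_acyclic uniq_q size_q)).
rewrite /cycle rcons_path -last_q Euv andbT.
by apply: sub_path path_q => x y /andP [].
Qed.

Lemma face_reaches_reverse u v : E u v -> fconnect face (u, v) (v, u).
Proof.
move=> Euv; apply/idPn => no_rev.
set B := connect (remove_edge u v) v; have nBu : ~~ B u := tree_edge_cut Euv.
pose reached := [pred d | [&& E d.1 d.2, B d.2 & fconnect face (u, v) d]].
(* Leaving B means crossing uv, i.e. reaching (v, u), so every reached dart points into B. *)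
have reached_closed : fclosed face reached.
  apply: intro_closed; first exact: fconnect_sym face_inj.
  move=> [i j] _ /eqP <- /and3P [/= Eij Bj reach_ij].
  have Eji : E j i by rewrite E_sym.
  rewrite /face Eij inE /= rot_in //=.
  have reach_next : fconnect face (u, v) (j, rot j i).
    by apply: connect_trans reach_ij _; apply: connect1; rewrite /= /face Eij.
  rewrite reach_next andbT; apply: (connect_trans Bj (connect1 _)).
  rewrite /remove_edge /= rot_in //= !inE !xpair_eqE.
  case: (j =P u) => [eq_ju | _]; first by rewrite -eq_ju Bj in nBu.
  case: (j =P v) => [eq_jv | _] //=; case: (rot j i =P u) => //= eq_rot.
  by rewrite eq_rot eq_jv in reach_next; rewrite reach_next in no_rev.
have := closed_connect reached_closed (fconnect_finv face (u, v)).
have Bv : B v := connect0 _ v.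
rewrite !inE Euv Bv connect0 => /esym /and3P [Edart Bw _].
have := f_finv face_inj (u, v); rewrite /face Edart.
by case: (finv face (u, v)) Bw => i j /= Bj [eq_ju _]; rewrite -eq_ju Bj in nBu.
Qed.

Lemma face_reaches_around d j i : E j i -> fconnect face d (i, j) ->
  forall k, E j k -> fconnect face d (k, j).
Proof.
move=> Eji reach_ij k Ejk.
pose S := [pred k | E j k && fconnect face d (k, j)].
suff /andP [] : S k by [].
apply: (rot_cyclic (j := j) (S := S) (i0 := i)) => //; first by rewrite /= Eji.
  by move=> l; rewrite inE => /andP [].
move=> l /andP [Ejl reach_lj]; rewrite /= rot_in //=.
apply: connect_trans (face_reaches_reverse (rot_in Ejl)).
by apply: connect_trans reach_lj (connect1 _); rewrite /= /face (E_sym l) Ejl.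
Qed.

Theorem face_single_orbit d1 d2 : E d1.1 d1.2 -> E d2.1 d2.2 -> fconnect face d1 d2.
Proof.
case: d1 d2 => [a b] [x y] /= Eab Exy.
pose into_reached := [pred z | [forall w, E z w ==> fconnect face (a, b) (w, z)]].
have into_reachedP z :
    reflect (forall w, E z w -> fconnect face (a, b) (w, z)) (into_reached z).
  exact: (iffP forall_inP).
have b_in : into_reached b.
  by apply/into_reachedP; apply: (face_reaches_around (i := a)); rewrite // E_sym.
have closed_into : closed E into_reached.
  apply: intro_closed; first exact: sym_connect_sym.
  move=> z z' Ezz' /into_reachedP reach_z; apply/into_reachedP.
  apply: (face_reaches_around (i := z)); first by rewrite E_sym.
  by apply: connect_trans (reach_z _ Ezz') (face_reaches_reverse _); rewrite E_sym.
have /into_reachedP -> // : y \in into_reached.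
  by rewrite -(closed_connect closed_into (E_connected b y)).
by rewrite E_sym.
Qed.

End TreeFaces.

Section SingleRing.
Variables (n : nat) (c : 'I_n -> point) (eps : R) (E : rel 'I_n) (g : 'I_n -> R).
Hypothesis disjoint : pairwise_disjoint c.
Hypothesis eps_le2 : eps <= 2.
Hypothesis E_sym : symmetric E.
Hypothesis E_link : forall i j, E i j -> potential_link c eps i j.
Hypothesis g_unit : forall i, g i = 1 \/ g i = -1.

Lemma link_dist_pos j k : E j k -> 0 < dist (c j) (c k).
Proof. by case/E_link => neq_jk _; have := center_dist_gt2 disjoint neq_jk; lra. Qed.

Lemma link_phase_inj j : {in E j &, injective (link_phase c g j)}.
Proof.
move=> k k' Ejk Ejk' same_phase.
have [neq_jk near_k] := E_link Ejk; have [neq_jk' near_k'] := E_link Ejk'.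
apply: (link_pos_inj disjoint neq_jk neq_jk'); [lra | lra |].
have one_turn : 0 < 1 <= 1 by lra.
have full_turn l : E j l -> link_phase c g j l = link_phase c g j k ->
    on_circle (c j) (link_angle c j k + 2 * PI * g j * 1) = link_pos c j l.
  move=> Ejl same; rewrite (on_circle_link_phase k (g_unit j) (link_dist_pos Ejl) one_turn).
  by rewrite same gap_self.
by rewrite -(full_turn k Ejk) // -(full_turn k' Ejk').
Qed.

Definition next_link (j i : 'I_n) : 'I_n := cyc_succ (E j) (link_phase c g j) i.

Lemma next_link_in j i : E j i -> E j (next_link j i).
Proof. by case/(cyc_succP (link_phase c g j)). Qed.

Lemma next_link_inj j : {in E j &, injective (next_link j)}.
Proof. exact: cyc_succ_inj (link_phase_bounds c g j) (link_phase_inj (j := j)). Qed.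

Lemma next_link_cyclic j (S : pred 'I_n) i0 : S i0 -> {subset S <= E j} ->
  (forall i, S i -> S (next_link j i)) -> {subset E j <= S}.
Proof.
exact: (cyc_succ_cyclic (N := E j) (link_phase_bounds c g j) (link_phase_inj (j := j))).
Qed.

Lemma ring_step_next_link i j : E i j -> ring_step c E g (i, j) (j, next_link j i).
Proof.
move=> Eij; have Eji : E j i by rewrite E_sym.
have [Ejk min_k] := cyc_succP (link_phase c g j) Eji.
rewrite -/(next_link j i) in Ejk min_k; set k := next_link j i in Ejk min_k *.
have gap_bnd := gap_bounds (link_phase_bounds c g j i) (link_phase_bounds c g j k).
split=> //; split=> //; split=> //.
exists (link_angle c j i), (gap (link_phase c g j i) (link_phase c g j k)).
split; first exact/link_angleP/link_dist_pos.
split=> //; split.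
  exact/(on_circle_link_phase i (g_unit j) (link_dist_pos Ejk) gap_bnd).
move=> s' s'_bounds l Ejl; have s'_le1 : 0 < s' <= 1 by lra.
move/(on_circle_link_phase i (g_unit j) (link_dist_pos Ejl) s'_le1).
by have := min_k l Ejl; lra.
Qed.

Lemma same_ring_of_fconnect d1 d2 : E d1.1 d1.2 ->
  fconnect (face E next_link) d1 d2 -> same_ring c E g d1 d2.
Proof.
move=> dart1 /connectP [p path_p ->]; elim: p d1 dart1 path_p => [|d p IHp] d1 dart1 /=.
  by move=> _; apply: rt_refl.
case/andP => /eqP face_d1 path_p.
have step : ring_step c E g d1 d.
  rewrite -face_d1; case: d1 dart1 {face_d1} => i j Eij.
  by rewrite /face Eij; apply: ring_step_next_link.
have dart_d : E d.1 d.2.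
  by rewrite -face_d1; apply: face_dart dart1 => //; apply: next_link_in.
exact: rt_trans (rt_step _ _ _ _ step) (IHp d dart_d path_p).
Qed.

End SingleRing.

Theorem lemma7 (n : nat) (c : 'I_n -> point) (eps : R)
  (E : rel 'I_n) (f g : 'I_n -> R) :
  pairwise_disjoint c ->
  Rlt 0 eps -> Rlt eps (1 / 2) ->
  SCS c eps E f g ->
  is_tree E ->
  single_ring c E g.
Proof.
move=> disjoint _ eps_small [[E_sym [E_irr [E_link _]]] [sched _]] [E_connected E_acyclic].
have eps_le2 : eps <= 2 by lra.
have g_unit i : g i = 1 \/ g i = -1 by case: (sched i).
move=> d1 d2 dart1 dart2.
apply: (same_ring_of_fconnect disjoint E_sym E_link g_unit dart1).
apply: (face_single_orbit E_sym _ E_connected E_acyclic) dart1 dart2.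
- by move=> i; apply/negbTE.
- exact: next_link_in.
- exact: next_link_inj disjoint eps_le2 E_link g_unit.
- exact: next_link_cyclic disjoint eps_le2 E_link g_unit.
Qed.
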